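(* Let $H$ be a digraph with at least two vertices and $r\in V(H)$ such that every vertex of $H$ is reachable from $r$, and let $(\hat T,\{B_x\}_{x\in V(\hat T)})$ be the $r$-rooted cut decomposition of $H$. Let $R$ be the set of arcs $uv\in A(H)$ such that $v\in V(\hat T)$ and $u\in B_x$ for some node $x$ of the subtree $\hat T_v$ (i.e. $v$ is an ancestor of $x$ or $v=x$). Then every out-tree $T$ in $H$ rooted at $r$ satisfies $A(T)\cap R=\emptyset$.
   Context: Digraphs are finite and without loops; paths are directed. An out-tree is an oriented tree with exactly one vertex of in-degree zero (its root). A vertex $v$ is bi-reachable from $r$ if there are two internally vertex-disjoint directed paths from $r$ to $v$. For a digraph $H$ with at least two vertices and $r\in V(H)$ such that every vertex of $H$ is reachable from $r$, the diblock $B_r$ of $r$ in $H$ is the set of all vertices bi-reachable from $r$, together with $r$ and all out-neighbours of $r$. For $x\in B_r\setminus\{r\}$ let $X_x$ be the set of vertices $v\in V(H)\setminus B_r$ such that every directed $r$–$v$ path intersects $B_r$ for the last time in $x$; $x$ is a bottleneck of $B_r$ if $X_x\ne\emptyset$ (the sets $X_x$ partition $V(H)\setminus B_r$). The $r$-rooted cut decomposition $(\hat T,\{B_x\}_{x\in V(\hat T)})$ of $H$ is defined recursively: $\hat T$ is a rooted tree with root $r$ and $V(\hat T)\subseteq V(H)$; the set associated with the root is $B_r$; the children of $r$ are the bottlenecks of $B_r$; and for each bottleneck $x$, the subtree of $\hat T$ rooted at $x$ together with its associated sets is the $x$-rooted cut decomposition of the induced subgraph $H[X_x\cup\{x\}]$.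 For a node $x$, $\hat T_x$ is the subtree of $\hat T$ rooted at $x$. *)

From mathcomp Require Import all_boot.
Set Implicit Arguments. Unset Strict Implicit. Unset Printing Implicit Defensive.

(* A digraph is a finite type V of vertices with an arc relation E : rel V
   (loops excluded by a hypothesis in the theorem).  Vertex subsets used for
   induced subgraphs are represented as predicates S : V -> Prop. *)

Section Digraph.
Variables (V : finType) (E : rel V).

(* u :: p is a directed path from u to v in the induced subgraph H[S]:
   consecutive vertices joined by arcs, all vertices in S, no repetition. *)
Definition dpath (S : V -> Prop) (u v : V) (p : seq V) : Prop :=
  [/\ path E u p, (forall y, y \in u :: p -> S y), last u p = v & uniq (u :: p)].

(* internal vertices of the path u :: p (all but the two ends) *)
Definition interior (u : V) (p : seq V) : seq V := behead (belast u p).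

Definition bireach (S : V -> Prop) (r v : V) : Prop :=
  exists p1 p2, [/\ dpath S r v p1, dpath S r v p2, p1 <> p2 &
     forall y, y \in interior r p1 -> y \notin interior r p2].

Definition diblock (S : V -> Prop) (r v : V) : Prop :=
  S v /\ (v = r \/ E r v \/ bireach S r v).

Definition last_in (B : V -> Prop) (r : V) (p : seq V) (x : V) : Prop :=
  exists p1 p2, [/\ r :: p = p1 ++ x :: p2, B x & forall y, y \in p2 -> ~ B y].

Definition Xset (S : V -> Prop) (r x v : V) : Prop :=
  [/\ S v, ~ diblock S r v &
      forall p, dpath S r v p -> last_in (diblock S r) r p x].

Definition bottleneck (S : V -> Prop) (r x : V) : Prop :=
  [/\ diblock S r x, x <> r & exists v, Xset S r x v].

(* InDec S r S' x : the subtree of the r-rooted cut decomposition of H[S]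
   rooted at the node x is the x-rooted cut decomposition of H[S'].
   In particular x is a node of the decomposition and its associated set is
   B_x = diblock S' x. *)
Inductive InDec : (V -> Prop) -> V -> (V -> Prop) -> V -> Prop :=
  | InDec_root S r : InDec S r S r
  | InDec_child S r y S' x :
      bottleneck S r y ->
      InDec (fun v => Xset S r y v \/ v = y) y S' x ->
      InDec S r S' x.

Definition Rarc (r u v : V) : Prop :=
  E u v /\ exists Sv Sx x,
    [/\ InDec (fun _ => True) r Sv v, InDec Sv v Sx x & diblock Sx x u].

Definition und_adj (AT : {set V * V}) : rel V :=
  fun a b => ((a, b) \in AT) || ((b, a) \in AT).

Definition out_tree (r : V) (VT : {set V}) (AT : {set V * V}) : Prop :=
  [/\ forall a, a \in AT -> [&& E a.1 a.2, a.1 \in VT & a.2 \in VT],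
      forall a b, (a, b) \in AT -> (b, a) \notin AT,
      forall a b, a \in VT -> b \in VT -> connect (und_adj AT) a b,
      forall c : seq V, uniq c -> 2 < size c -> ~~ cycle (und_adj AT) c &
      r \in VT /\
      (forall v, v \in VT -> ((forall u, (u, v) \notin AT) <-> v = r))].

End Digraph.

From mathcomp Require Import all_boot.
From mathcomp Require Import zify.
From Stdlib Require Import Classical.
Set Implicit Arguments. Unset Strict Implicit.

(* If [uv] lies in R, then [u] lies in the vertex set of the subgraph whose
   decomposition is rooted at [v], and an induction along the decomposition
   shows that every r-u path of H passes through [v]: a bottleneck [y]
   separates [X_y] from [r], because every other vertex of the diblock can be
   reached from [r] while avoiding [y] (one of two internally disjoint paths
   misses it).  In an out-tree the tree path from [r] to [u] therefore runs
   through [v], and with the arc [uv] it closes a cycle. *)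

Lemma last_mem_split (T : eqType) (B : T -> Prop) (s : seq T) x :
  x \in s -> B x ->
  exists p1 y p2, [/\ s = p1 ++ y :: p2, B y & forall q, q \in p2 -> ~ B q].
Proof.
elim: s x => [//|a s IHs] x; rewrite inE => xs Bx.
case: (classic (exists2 q, q \in s & B q)) => [[q qs Bq]|noBs].
  have [p1 [y [p2 [-> By p2B]]]] := IHs q qs Bq.
  by exists (a :: p1), y, p2.
have Ba : B a.
  by case/orP: xs => [/eqP <- //|xs]; case: noBs; exists x.
by exists [::], a, s; split=> // q qs Bq; apply: noBs; exists q.
Qed.

Lemma path_cat_suffix (T : Type) (e : rel T) r s p1 y p2 :
  r :: s = p1 ++ y :: p2 -> path e r s -> path e y p2 /\ last r s = last y p2.
Proof.
case: p1 => [|a p1] /= [-> ->] //.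
by rewrite cat_path last_cat /= => /and3P[_ _ ->].
Qed.

Section Dominance.
Variables (V : finType) (E : rel V).

Lemma mem_interior (r : V) p q :
  q \in r :: p -> q <> r -> q <> last r p -> q \in interior r p.
Proof.
case/lastP: p => [|p l]; first by rewrite inE => /eqP.
rewrite /interior belast_rcons last_rcons /= inE mem_rcons !inE.
by case/or3P=> [/eqP|/eqP|].
Qed.

Lemma diblock_path_avoiding S r x y :
  diblock E S r x -> y <> r -> y <> x ->
  exists p, [/\ path E r p, last r p = x, forall q, q \in p -> S q & y \notin p].
Proof.
case=> Sx [->|[Erx|[p1 [p2 [[P1 S1 L1 _] [P2 S2 L2 _] _ disj]]]]] yr yx.
- by exists [::].
- exists [:: x]; split=> [|//||]; first by rewrite /= Erx.
    by move=> q; rewrite inE => /eqP ->.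
  by rewrite inE; apply/eqP.
- have S1' q : q \in p1 -> S q by move=> qp; apply: S1; rewrite inE qp orbT.
  have S2' q : q \in p2 -> S q by move=> qp; apply: S2; rewrite inE qp orbT.
  case: (boolP (y \in p1)) => yp1; last by exists p1.
  exists p2; split=> //; apply/negP => yp2.
  have /disj : y \in interior r p1 by rewrite mem_interior ?L1 ?inE ?yp1 ?orbT.
  by rewrite mem_interior ?L2 ?inE ?yp2 ?orbT.
Qed.

Lemma dpath_of_walk S r w s :
  path E r s -> last r s = w -> (forall q, q \in r :: s -> S q) ->
  exists2 p, dpath E S r w p & {subset p <= s}.
Proof.
move=> Ps Ls Ss; move: Ls; case: (shortenP Ps) => p Pp Up ps Lp.
exists p => //; split=> // q; rewrite inE => /orP[/eqP ->|/ps qs].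
  by apply: Ss; rewrite mem_head.
by apply: Ss; rewrite inE qs orbT.
Qed.

Lemma Xset_walk S r y w s :
  Xset E S r y w -> path E r s -> last r s = w ->
  (forall q, q \in r :: s -> S q) -> y \in r :: s.
Proof.
move=> [_ _ allp] Ps Ls Ss; have [p Dp ps] := dpath_of_walk Ps Ls Ss.
have [p1 [p2 [rp _ _]]] := allp p Dp.
have : y \in r :: p by rewrite rp mem_cat mem_head orbT.
by rewrite !inE => /orP[-> //|/ps ->]; rewrite orbT.
Qed.

(* Otherwise an r-z path leaves the diblock last at some [x <> y]; an
   [r]-[x] path avoiding [y], then the rest of that path, then the part of
   [p] after [z] would reach [w] without meeting [y]. *)
Lemma Xset_suffix S r y w p p1 p2 z :
  y <> r -> Xset E S r y w -> dpath E S r w p -> r :: p = p1 ++ y :: p2 ->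
  (forall q, q \in p2 -> ~ diblock E S r q) -> z \in p2 -> Xset E S r y z.
Proof.
move=> yr Xw Dp rp p2B zp2; have [_ _ allp] := Xw; have [Pp Sp Lp Up] := Dp.
have [_ [_ [_ By _]]] := allp p Dp.
case/splitPr: zp2 rp p2B => t1 t2 rp p2B.
have Sz : S z by apply: Sp; rewrite rp !(mem_cat, inE) eqxx !orbT.
split=> [//||Q [PQ SQ LQ _]]; first by apply: p2B; rewrite mem_cat mem_head orbT.
have Br : diblock E S r r by split; [apply: SQ; rewrite mem_head | left].
have [s1 [x [s2 [rQ Bx s2B]]]] := last_mem_split (mem_head r Q) Br.
case: (eqVneq x y) => [<-|xy]; first by exists s1, s2.
have [A [PA LA SA yA]] := diblock_path_avoiding Bx yr (nesym (elimN eqP xy)).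
have [Ps2 Ls2] := path_cat_suffix rQ PQ.
have [Pyt Lyt] := path_cat_suffix rp Pp.
have [Pt2 Lt2] := path_cat_suffix (y := z) (p1 := y :: t1) erefl Pyt.
have ys2 : y \notin s2 by apply/negP => /s2B[].
have yt2 : y \notin t2.
  move: Up; rewrite rp cat_uniq => /and3P[_ _ /andP[]].
  by rewrite mem_cat inE !negb_or => /and3P[].
have Ws : path E r (A ++ s2 ++ t2) by rewrite !cat_path PA LA Ps2 -Ls2 LQ.
have Wl : last r (A ++ s2 ++ t2) = w by rewrite !last_cat LA -Ls2 LQ -Lt2 -Lyt.
have WS q : q \in r :: A ++ s2 ++ t2 -> S q.
  rewrite inE !mem_cat => /or4P[/eqP ->|/SA //|qs2|qt2].
  - exact: Sp (mem_head _ _).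
  - by apply: SQ; rewrite rQ !(mem_cat, inE) qs2 !orbT.
  - by apply: Sp; rewrite rp !(mem_cat, inE) qt2 !orbT.
have := Xset_walk Xw Ws Wl WS.
by rewrite inE !mem_cat (negbTE yA) (negbTE ys2) (negbTE yt2) !orbF => /eqP.
Qed.

Lemma Xset_dpath_suffix S r y w p :
  y <> r -> Xset E S r y w -> dpath E S r w p ->
  exists2 p2, dpath E (fun v => Xset E S r y v \/ v = y) y w p2
            & {subset y :: p2 <= r :: p}.
Proof.
move=> yr Xw Dp; have [_ _ allp] := Xw; have [Pp _ Lp Up] := Dp.
have [p1 [p2 [rp _ p2B]]] := allp p Dp.
have [Pp2 Lp2] := path_cat_suffix rp Pp.
exists p2; last by move=> q qp2; rewrite rp mem_cat qp2 orbT.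
split=> //; last by move: Up; rewrite rp cat_uniq => /and3P[].
  move=> q; rewrite inE => /orP[/eqP ->|qp2]; [by right | left].
  exact: Xset_suffix yr Xw Dp rp p2B qp2.
by rewrite -Lp2.
Qed.

Lemma InDec_sub S r S' x : InDec E S r S' x -> forall q, S' q -> S q.
Proof.
elim=> {S r S' x} // S r y S' x [[Sy _] _ _] _ IH q /IH [[Sq _ _]|->] //.
Qed.

Lemma InDec_dominates S r S' x :
  InDec E S r S' x -> forall w p, S' w -> dpath E S r w p -> x \in r :: p.
Proof.
elim=> {S r S' x} [S r w p _ _ | S r y S' x [_ yr _] Dy IH w p S'w Dp].
  exact: mem_head.
case: (InDec_sub Dy S'w) => [Xw|wy].
  have [p2 Dp2 sub] := Xset_dpath_suffix yr Xw Dp.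
  exact/sub/(IH _ _ S'w Dp2).
have [_ _ Lp _] := Dp; subst w.
have D0 : dpath E (fun v => Xset E S r y v \/ v = y) y y [::].
  by split=> // q; rewrite inE => /eqP ->; right.
by move: (IH _ _ S'w D0); rewrite inE => /eqP ->; rewrite -Lp mem_last.
Qed.

End Dominance.

Section OutTree.
Variables (V : finType) (E : rel V) (r : V) (VT : {set V}) (AT : {set V * V}).
Hypotheses (irrE : irreflexive E) (tree : out_tree E r VT AT).

Local Notation tarc := [rel a b | (a, b) \in AT].

Lemma out_tree_acyclic c s :
  uniq (c :: s) -> path tarc c s -> (last c s, c) \in AT -> False.
Proof.
have [arcE asym _ nocycle _] := tree.
case: s => [|d [|d' s]] Us Ps back.
- by move: back => /arcE /andP[]; rewrite /= irrE.
- by move: Ps back => /= /andP[cd _] /asym; rewrite cd.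
- apply/negP: (nocycle _ Us isT).
  rewrite negbK /cycle rcons_path; apply/andP; split; last by rewrite /und_adj back.
  by apply: sub_path Ps => a b /= ab; rewrite /und_adj ab.
Qed.

Lemma out_tree_path_from_root u :
  u \in VT -> exists p, [/\ path tarc r p, last r p = u & uniq (r :: p)].
Proof.
have [arcE _ _ _ [_ indeg0]] := tree.
suff grow n c s : #|V| - size s < n -> c \in VT -> path tarc c s ->
    last c s = u -> uniq (c :: s) ->
    exists p, [/\ path tarc r p, last r p = u & uniq (r :: p)].
  by move=> uVT; apply: (grow #|V|.+1 u [::]); rewrite ?subn0.
elim: n c s => [//|n IHn] c s sn cVT Ps Ls Us.
case: (eqVneq c r) => [cr|cr]; first by exists s; rewrite -cr.
case: (pickP (fun d => (d, c) \in AT)) => [d dc|noin]; last first.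
  by case/eqP: cr; apply/(indeg0 c cVT) => d; rewrite noin.
have dVT : d \in VT by case/and3P: (arcE _ dc).
case: (boolP (d \in c :: s)) => [|ds].
  rewrite inE => /orP[/eqP eq_dc|ds].
    by rewrite eq_dc in dc; case: (out_tree_acyclic (s := [::]) isT isT dc).
  case/splitPr: ds Ps Ls Us sn => t1 t2.
  rewrite -cat_rcons cat_path -cat_cons cat_uniq => /andP[Pt1 _] _ /and3P[Ut1 _ _] _.
  by case: (out_tree_acyclic Ut1 Pt1); rewrite last_rcons.
have Uds : uniq (d :: c :: s) by rewrite /= ds.
apply: (IHn d (c :: s)) => //=; last by rewrite dc.
move: sn (max_card (mem (d :: c :: s))); rewrite (card_uniqP Uds) /=.
by move: #|V| (size s) => N k; lia.
Qed.

Lemma out_tree_back_arc u v p :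
  path tarc r p -> last r p = u -> uniq (r :: p) -> (u, v) \in AT ->
  v \notin r :: p.
Proof.
move=> Pp Lp Up uv; apply/negP => vp.
case/splitPr def_rp: {1}(r :: p) / vp => [p1 p2].
have [Pp2 Lp2] := path_cat_suffix def_rp Pp.
apply: (out_tree_acyclic (c := v) (s := p2)) => //; last by rewrite -Lp2 Lp.
by move: Up; rewrite def_rp cat_uniq => /and3P[].
Qed.

End OutTree.

Theorem corollary1 (V : finType) (E : rel V) (r : V) :
  irreflexive E ->
  1 < #|V| ->
  (forall v, connect E r v) ->
  forall (VT : {set V}) (AT : {set V * V}),
    out_tree E r VT AT ->
    forall a, a \in AT -> ~ Rarc E r a.1 a.2.
Proof.
move=> irrE _ _ VT AT tree [u v] uv [_ [Sv [Sx [x [Dv Dx [Sxu _]]]]]] /=.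
have [arcE _ _ _ _] := tree.
have uVT : u \in VT by case/and3P: (arcE _ uv).
have [p [Pp Lp Up]] := out_tree_path_from_root irrE tree uVT.
have Dp : dpath E (fun _ => True) r u p.
  by split=> //; apply: sub_path Pp => a b /arcE /andP[].
have vp : v \in r :: p := InDec_dominates Dv (InDec_sub Dx Sxu) Dp.
by move: vp; apply/negP/(out_tree_back_arc irrE tree Pp Lp Up uv).
Qed.
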